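(* Let $A,B\in\mathbb{T}^{m\times n}$ have integer finite entries, with every column of $A$ and every row of $B$ containing a finite entry, and let $F=A^\sharp\circ B$. Suppose there exists $v\in\mathbb{R}^n$ with $F(v)=\rho(F)+v$ and $\rho(F)\ne0$. Consider value iteration: $u^0=0$, $u^{\ell+1}=F(u^\ell)$, continued while $\max_iu^\ell_i\ge0$ and $\min_iu^\ell_i\le0$, with $N$ the first index where this fails. Then $N\le 2n^2W$.
   Context: $\mathbb{T}=\mathbb{R}\cup\{-\infty\}$. $(B\odot x)_i=\max_j(B_{ij}+x_j)$; $A^\sharp(y)_j=\min_i(-A_{ij}+y_i)$ with $(+\infty)+(-\infty)=+\infty$. The scalar $\rho(F)$ with $F(v)=\rho(F)+v$ for some $v\in\mathbb{R}^n$ is unique (ergodic constant). $W=\max\{|A_{ij}-B_{ih}|: A_{ij}\ne-\infty,\ B_{ih}\ne-\infty\}$. *)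

(* Tropical semiring T = R ∪ {-oo}; entries of A, B are
   integers or -oo, encoded as option int (None = -oo). *)
From HB Require Import structures.
From mathcomp Require Import all_boot all_order all_algebra.
Set Implicit Arguments. Unset Strict Implicit. Unset Printing Implicit Defensive.
Import Order.TTheory GRing.Theory Num.Theory.
Local Open Scope ring_scope.

(* Extended reals R ∪ {-oo, +oo}, needed for the intermediate values of A^# . *)
Inductive ext (R : Type) := ENInf | EFin of R | EPInf.
Arguments ENInf {R}. Arguments EPInf {R}. Arguments EFin {R} _.

Section Ext.
Variable R : realFieldType.

Definition ele (x y : ext R) : bool :=
  match x, y with
  | ENInf, _ => true
  | _, EPInf => true
  | EFin a, EFin b => a <= b
  | _, _ => false
  end.

Definition emax (x y : ext R) : ext R := if ele x y then y else x.
Definition emin (x y : ext R) : ext R := if ele x y then x else y.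

Definition eshift (c : R) (x : ext R) : ext R :=
  match x with ENInf => ENInf | EFin r => EFin (c + r) | EPInf => EPInf end.

Definition tmulE (b : option int) (x : ext R) : ext R :=
  match b with None => ENInf | Some b => eshift (b%:~R) x end.

(* -A_ij + y_i, with the convention (+oo) + (-oo) = +oo *)
Definition tsharpE (a : option int) (y : ext R) : ext R :=
  match a with None => EPInf | Some a => eshift (- a%:~R) y end.

Definition tprod (m n : nat) (B : 'M[option int]_(m, n)) (x : 'I_n -> ext R)
  : 'I_m -> ext R :=
  fun i => \big[emax/ENInf]_(h < n) tmulE (B i h) (x h).

Definition tsharp (m n : nat) (A : 'M[option int]_(m, n)) (y : 'I_m -> ext R)
  : 'I_n -> ext R :=
  fun j => \big[emin/EPInf]_(i < m) tsharpE (A i j) (y i).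

Definition Fop (m n : nat) (A B : 'M[option int]_(m, n)) (x : 'I_n -> ext R)
  : 'I_n -> ext R := tsharp A (tprod B x).

Definition viter (m n : nat) (A B : 'M[option int]_(m, n)) (l : nat)
  : 'I_n -> ext R := iter l (Fop A B) (fun _ => EFin 0).

Definition vcont (n : nat) (u : 'I_n -> ext R) : bool :=
  ele (EFin 0) (\big[emax/ENInf]_(i < n) u i) &&
  ele (\big[emin/EPInf]_(i < n) u i) (EFin 0).
End Ext.

Definition Wconst (m n : nat) (A B : 'M[option int]_(m, n)) : nat :=
  \max_(i < m) \max_(j < n) \max_(h < n)
    match A i j, B i h with
    | Some a, Some b => absz (a - b)%R
    | _, _ => 0%N
    end.

(* Value iteration reads off integer walk weights.  Call j -> h an arc of
   weight B_ih - A_ij (some row i, both entries finite); its absolute value is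
   at most W.  Following at each step a row attaining the minimum in A^# and a
   column attaining the maximum in B, one of them optimal for u^l and the other
   for v, one finds for every l and j a walk j = p_0, ..., p_l whose weight
   bounds u^l_j from below when rho > 0 (from above when rho < 0, with the roles
   swapped) and whose arcs satisfy rho + v(p_t) - v(p_(t+1)) <= weight
   (reversed for rho < 0).  Hence every closed subwalk has positive, thus
   integral >= 1, weight, and cutting out cycles shows that a walk of length l
   weighs at least l / n - (n - 1) W.  At l = n ((n - 1) W + 1) <= 2 n^2 W every
   u^l_j is therefore >= 1 (resp. <= -1), so the iteration has stopped. *)

From HB Require Import structures.
From mathcomp Require Import all_boot all_order all_algebra.
From mathcomp Require Import zify lra.
Import Order.TTheory GRing.Theory Num.Theory.
Set Implicit Arguments. Unset Strict Implicit. Unset Printing Implicit Defensive.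
Local Open Scope ring_scope.

Section ExtendedOrder.
Variable R : realFieldType.
Implicit Types (x y : ext R) (c d : R).

Lemma ele_refl x : ele x x.
Proof. by case: x => //= a. Qed.

Lemma ele_trans : transitive (@ele R).
Proof. by move=> [|b|] [|a|] [|c|] //=; apply: le_trans. Qed.

Lemma ele_total x y : ele x y || ele y x.
Proof. by case: x => [|a|]; case: y => [|b|] //=; apply: le_total. Qed.

Lemma ele_pinfty x : ele x EPInf.
Proof. by case: x. Qed.

Lemma emin_lel x y : ele (emin x y) x.
Proof.
by rewrite /emin; case: ifP => [_|]; [exact: ele_refl | have /orP[->|] := ele_total x y].
Qed.

Lemma emin_ler x y : ele (emin x y) y.
Proof. by rewrite /emin; case: ifP => // _; exact: ele_refl. Qed.

Lemma emax_lel x y : ele x (emax x y).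
Proof. by rewrite /emax; case: ifP => // _; exact: ele_refl. Qed.

Lemma emax_ler x y : ele y (emax x y).
Proof.
by rewrite /emax; case: ifP => [_|]; [exact: ele_refl | have /orP[->|] := ele_total x y].
Qed.

Lemma bigemin_le (I : eqType) (r : seq I) (F : I -> ext R) i :
  i \in r -> ele (\big[@emin R/EPInf]_(k <- r) F k) (F i).
Proof.
elim: r => [//|a r IH]; rewrite inE big_cons => /orP[/eqP->|/IH]; first exact: emin_lel.
exact/ele_trans/emin_ler.
Qed.

Lemma le_bigemax (I : eqType) (r : seq I) (F : I -> ext R) i :
  i \in r -> ele (F i) (\big[@emax R/ENInf]_(k <- r) F k).
Proof.
elim: r => [//|a r IH]; rewrite inE big_cons => /orP[/eqP->|/IH]; first exact: emax_lel.
by move/ele_trans; apply; apply: emax_ler.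
Qed.

Lemma bigemin_attained (I : Type) (r : seq I) (F : I -> ext R) :
  \big[@emin R/EPInf]_(k <- r) F k = EPInf \/
  exists i, \big[@emin R/EPInf]_(k <- r) F k = F i.
Proof.
apply: (big_ind (fun x => x = EPInf \/ exists i, x = F i)); [by left | | by eauto].
by move=> x y hx hy; rewrite /emin; case: ifP.
Qed.

Lemma bigemax_attained (I : Type) (r : seq I) (F : I -> ext R) :
  \big[@emax R/ENInf]_(k <- r) F k = ENInf \/
  exists i, \big[@emax R/ENInf]_(k <- r) F k = F i.
Proof.
apply: (big_ind (fun x => x = ENInf \/ exists i, x = F i)); [by left | | by eauto].
by move=> x y hx hy; rewrite /emax; case: ifP.
Qed.

Lemma eshiftA c d x : eshift c (eshift d x) = eshift (c + d) x.
Proof. by case: x => //= a; rewrite addrA. Qed.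

Lemma ele_eshift c x y : ele x y -> ele (eshift c x) (eshift c y).
Proof. by case: x => [|a|]; case: y => [|b|] //=; rewrite lerD2l. Qed.

End ExtendedOrder.

Section TropicalOperators.
Variables (R : realFieldType) (m n : nat).
Implicit Types (A B : 'M[option int]_(m, n)) (x : 'I_n -> ext R) (y : 'I_m -> ext R).

Lemma tprod_ge B x i h b :
  B i h = Some b -> ele (eshift b%:~R (x h)) (tprod B x i).
Proof.
move=> hb; have := le_bigemax (fun k => tmulE (B i k) (x k)) (mem_index_enum h).
by rewrite hb.
Qed.

Lemma tprod_attained B x i :
  tprod B x i = ENInf \/
  exists h b, B i h = Some b /\ tprod B x i = eshift b%:~R (x h).
Proof.
rewrite /tprod.
case: (bigemax_attained (index_enum 'I_n) (fun k => tmulE (B i k) (x k))) => [->|[h ->]].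
  by left.
by case hb: (B i h) => [b|]; [right; exists h, b | left].
Qed.

Lemma tsharp_le A y i j a :
  A i j = Some a -> ele (tsharp A y j) (eshift (- a%:~R) (y i)).
Proof.
move=> ha; have := bigemin_le (fun k => tsharpE (A k j) (y k)) (mem_index_enum i).
by rewrite ha.
Qed.

Lemma tsharp_attained A y j :
  tsharp A y j = EPInf \/
  exists i a, A i j = Some a /\ tsharp A y j = eshift (- a%:~R) (y i).
Proof.
rewrite /tsharp.
case: (bigemin_attained (index_enum 'I_m) (fun k => tsharpE (A k j) (y k))) => [->|[i ->]].
  by left.
by case ha: (A i j) => [a|]; [right; exists i, a | left].
Qed.

End TropicalOperators.

Section Walks.
Variable T : Type.
Implicit Types (P : T -> T -> int -> Prop) (p : nat -> T) (c : nat -> int).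

Definition is_walk P (l : nat) p c := forall t, (t < l)%N -> P (p t) (p t.+1) (c t).

Definition scons (U : Type) (x : U) (f : nat -> U) : nat -> U :=
  fun t => if t is t'.+1 then f t' else x.

Definition splice (U : Type) (a d : nat) (f : nat -> U) : nat -> U :=
  fun t => if (t < a)%N then f t else f (t + d)%N.

Lemma is_walk_scons P l p c j w :
  P j (p 0%N) w -> is_walk P l p c -> is_walk P l.+1 (scons j p) (scons w c).
Proof. by move=> hP hw [|t] //= /hw. Qed.

Lemma is_walk_splice P l p c a b :
  (a <= b <= l)%N -> p a = p b -> is_walk P l p c ->
  is_walk P (l - (b - a)) (splice a (b - a) p) (splice a (b - a) c).
Proof.
move=> /andP[hab hbl] hpab hw t ht; rewrite /splice.
case: (ltnP t a) => hta; last first.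
  rewrite ifF; last by lia.
  by rewrite addSn; apply: hw; lia.
case: (ltnP t.+1 a) => [_|hta']; first by apply: hw; lia.
have -> : (t.+1 + (b - a))%N = b by lia.
by rewrite -hpab -(_ : t.+1 = a) //; [apply: hw | ]; lia.
Qed.

End Walks.

Lemma sum_scons (V : nmodType) (x : V) (f : nat -> V) l :
  \sum_(0 <= t < l.+1) scons x f t = x + \sum_(0 <= t < l) f t.
Proof. by rewrite big_nat_recl. Qed.

Lemma sum_splice (V : nmodType) (f : nat -> V) l a b : (a <= b <= l)%N ->
  \sum_(0 <= t < l - (b - a)) splice a (b - a) f t =
  \sum_(0 <= t < a) f t + \sum_(b <= t < l) f t.
Proof.
move=> /andP[hab hbl]; rewrite (big_cat_nat _ (n := a)) //=; last by lia.
congr (_ + _); first by apply: eq_big_nat => t /andP[_ hta]; rewrite /splice hta.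
rewrite [in RHS](_ : b = a + (b - a))%N ?big_addn; last by lia.
by apply: eq_big_nat => t /andP[hat _]; rewrite /splice ltnNge hat.
Qed.

Lemma nat_fun_repeat (T : finType) (p : nat -> T) :
  exists a b, [/\ (a < b)%N, (b <= #|T|)%N & p a = p b].
Proof.
pose f (t : 'I_#|T|.+1) := p t.
have /injectivePn[x [y x_neq_y fxy]] : ~~ injectiveb f.
  by apply/injectiveP => /leq_card; rewrite card_ord ltnn.
have [x_lt_y|y_lt_x|/val_inj x_eq_y] := ltngtP x y.
- by exists x, y; split=> //; rewrite -ltnS.
- by exists y, x; split=> //; rewrite -ltnS.
- by rewrite x_eq_y eqxx in x_neq_y.
Qed.

Section WalkWeight.
Variables (R : realFieldType) (T : finType) (phi : T -> R) (rho : R) (W : nat).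
Hypothesis rho_gt0 : 0 < rho.

Definition gain_step (j h : T) (w : int) :=
  rho + phi j - phi h <= w%:~R /\ - (W%:Z) <= w.

Lemma cycle_weight_gt0 l p c a b :
  is_walk gain_step l p c -> (a < b <= l)%N -> p a = p b ->
  0 < \sum_(a <= t < b) c t.
Proof.
move=> hw /andP[hab hbl] hpab.
rewrite -(ltr0z R) rmorph_sum /=.
apply: (@lt_le_trans _ _ (\sum_(a <= t < b) (rho - (phi (p t.+1) - phi (p t))))).
  rewrite sumrB telescope_sumr ?(ltnW hab) // hpab subrr subr0 sumr_const_nat.
  by rewrite pmulrn_lgt0 // subn_gt0.
apply: ler_sum_nat => t /andP[_ htb].
have [] := hw t (leq_trans htb hbl); lra.
Qed.

Lemma walk_weight_ge l p c : is_walk gain_step l p c ->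
  (l %/ #|T|)%:Z - (#|T|.-1 * W)%:Z <= \sum_(0 <= t < l) c t.
Proof.
elim/ltn_ind: l p c => l IH p c hw.
have [a [b [hab hbT hpab]]] := nat_fun_repeat p.
have [l_lt_T|T_le_l] := ltnP l #|T|.
  have : (- (W%:Z)) *+ (l - 0) <= \sum_(0 <= t < l) c t.
    by rewrite -sumr_const_nat; apply: ler_sum_nat => t /andP[_ /hw[]].
  rewrite divn_small //; nia.
have habl : (a <= b <= l)%N by rewrite ltnW //= (leq_trans hbT).
have hab_l : (a < b <= l)%N by rewrite hab (leq_trans hbT).
have shorter : (l - (b - a) < l)%N by lia.
(* Cutting out the cycle [a, b) costs at most one unit of [l %/ #|T|], and the
   cycle itself weighs at least one. *)
have := IH _ shorter _ _ (is_walk_splice habl hpab hw); rewrite sum_splice //.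
have := cycle_weight_gt0 hw hab_l hpab.
have -> : \sum_(0 <= t < l) c t =
    \sum_(0 <= t < a) c t + \sum_(a <= t < b) c t + \sum_(b <= t < l) c t.
  rewrite [LHS](big_cat_nat (n := a)) //=; last by lia.
  by rewrite [X in _ + X](big_cat_nat (n := b)) ?addrA //; lia.
have : (l %/ #|T| <= (l - (b - a)) %/ #|T| + 1)%N.
  have /(leq_div2r #|T|) : (l <= 1 * #|T| + (l - (b - a)))%N by lia.
  by rewrite divnMDl ?add1n ?addn1 //; lia.
move: (l %/ #|T|)%N ((l - (b - a)) %/ #|T|)%N => q q'.
move: (\sum_(0 <= t < a) c t) (\sum_(a <= t < b) c t) (\sum_(b <= t < l) c t).
lia.
Qed.

End WalkWeight.

Lemma iter_walk (R : realFieldType) (I : Type) (f : (I -> ext R) -> I -> ext R)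
    (P : I -> I -> int -> Prop) (r : rel (ext R)) :
  reflexive r -> transitive r ->
  (forall d x y, r x y -> r (eshift d x) (eshift d y)) ->
  (forall x j, exists h w, P j h w /\ r (eshift w%:~R (x h)) (f x j)) ->
  forall l j, exists p c, [/\ p 0%N = j, is_walk P l p c &
    r (EFin (\sum_(0 <= t < l) c t)%:~R) (iter l f (fun _ => EFin 0) j)].
Proof.
move=> r_refl r_trans r_shift f_step; elim=> [|l IH] j.
  by exists (fun _ => j), (fun _ => 0); rewrite big_geq.
have [h [w [Pjh r_fj]]] := f_step (iter l f (fun _ => EFin 0)) j.
have [p [c [p0 walk r_h]]] := IH h.
exists (scons j p), (scons w c); split=> //; first by apply: is_walk_scons; rewrite ?p0.
rewrite sum_scons intrD iterS; apply: r_trans r_fj.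
by have /(r_shift w%:~R) := r_h.
Qed.

Section Arcs.
Variables (m n : nat) (A B : 'M[option int]_(m, n)).

Definition arc (j h : 'I_n) (w : int) :=
  exists i a b, [/\ A i j = Some a, B i h = Some b & w = b - a].

Lemma arc_norm_le j h w : arc j h w -> `|w| <= (Wconst A B)%:Z.
Proof.
case=> i [a [b [ha hb ->]]].
have : (absz (a - b) <= Wconst A B)%N.
  apply: leq_trans (leq_bigmax i); apply: leq_trans (leq_bigmax j).
  by apply: leq_trans (leq_bigmax h); rewrite ha hb.
by rewrite -lez_nat abszE distrC.
Qed.

End Arcs.

Section Continuation.
Variables (R : realFieldType) (n : nat).
Implicit Type u : 'I_n -> ext R.

Lemma vcont_gt0 u : (forall j, ~~ ele (u j) (EFin 0)) -> ~~ vcont u.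
Proof.
move=> u_gt0; rewrite /vcont negb_and orbC.
by case: (bigemin_attained (index_enum 'I_n) u) => [->|[j ->]] //; rewrite u_gt0.
Qed.

Lemma vcont_lt0 u : (forall j, ~~ ele (EFin 0) (u j)) -> ~~ vcont u.
Proof.
move=> u_lt0; rewrite /vcont negb_and.
by case: (bigemax_attained (index_enum 'I_n) u) => [->|[j ->]] //; rewrite u_lt0.
Qed.

End Continuation.

Definition escape_time (n W : nat) := (n * (n.-1 * W + 1))%N.

Lemma escape_time_le n W :
  ((0 < n)%N -> (0 < W)%N) -> (escape_time n W <= 2 * n ^ 2 * W)%N.
Proof. by case: n => [//|n] /(_ isT); rewrite /escape_time; nia. Qed.

Section EigenvectorWalks.
Variables (R : realFieldType) (m n : nat) (A B : 'M[option int]_(m, n)).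
Hypothesis A_col : forall j : 'I_n, exists i : 'I_m, isSome (A i j).
Hypothesis B_row : forall i : 'I_m, exists h : 'I_n, isSome (B i h).
Variables (rho : R) (v : 'I_n -> R).
Hypothesis v_eigen : forall j, Fop A B (fun h => EFin (v h)) j = EFin (rho + v j).

Local Notation vE := (fun h => EFin (v h)).
Local Notation W := (Wconst A B).
Local Notation L := (escape_time n W).
Implicit Types x : 'I_n -> ext R.

Lemma row_lower_arc x j i a : A i j = Some a ->
  exists h w, [/\ arc A B j h w, rho + v j - v h <= w%:~R &
    ele (eshift w%:~R (x h)) (eshift (- a%:~R) (tprod B x i))].
Proof.
move=> ha.
have [h [b [hb vmax]]] : exists h b, B i h = Some b /\ tprod B vE i = EFin (b%:~R + v h).
  have [h1] := B_row i; case hb1: (B i h1) => [b1|] // _.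
  case: (tprod_attained B vE i) => [vmax|[h [b [hb ->]]]]; last by exists h, b.
  by have := tprod_ge vE hb1; rewrite vmax.
exists h, (b - a); split; first by exists i, a, b.
  have := tsharp_le (tprod B vE) ha.
  by rewrite -[tsharp _ _ _]/(Fop A B vE j) v_eigen vmax /= intrB; lra.
by rewrite intrB addrC -eshiftA; apply: ele_eshift; apply: tprod_ge.
Qed.

Lemma Fop_lower_arc x j : exists h w,
  (arc A B j h w /\ rho + v j - v h <= w%:~R) /\ ele (eshift w%:~R (x h)) (Fop A B x j).
Proof.
case: (tsharp_attained A (tprod B x) j) => [Finf|[i [a [ha Fi]]]].
  have [i] := A_col j; case ha: (A i j) => [a|] // _.
  have [h [w [? ? _]]] := row_lower_arc x ha.
  by exists h, w; rewrite /Fop Finf ele_pinfty.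
have [h [w [? ? ?]]] := row_lower_arc x ha.
by exists h, w; rewrite /Fop Fi.
Qed.

Lemma Fop_upper_arc x j : exists h w,
  (arc A B j h w /\ w%:~R <= rho + v j - v h) /\ ele (Fop A B x j) (eshift w%:~R (x h)).
Proof.
have [i [a [ha Fv]]] : exists i a,
    A i j = Some a /\ EFin (rho + v j) = eshift (- a%:~R) (tprod B vE i).
  have := v_eigen j; rewrite /Fop.
  by case: (tsharp_attained A (tprod B vE) j) => [->|[i [a [ha ->]]]] // <-; exists i, a.
have arc_le h b : B i h = Some b -> (b - a)%:~R <= rho + v j - v h.
  by move=> hb; have := ele_eshift (- a%:~R) (tprod_ge vE hb); rewrite -Fv /= intrB; lra.
have Fx_le := tsharp_le (tprod B x) ha.
case: (tprod_attained B x i) => [xmax|[h [b [hb xmax]]]].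
  have [h] := B_row i; case hb: (B i h) => [b|] // _.
  exists h, (b - a); split; first by split; [exists i, a, b | exact: arc_le].
  by apply: ele_trans Fx_le _; rewrite xmax.
exists h, (b - a); split; first by split; [exists i, a, b | exact: arc_le].
by rewrite intrB addrC -eshiftA -xmax.
Qed.

Lemma viter_escape_up : 0 < rho -> forall j, exists S : int,
  [/\ 0 < S, S <= (L * W)%:Z & ele (EFin S%:~R) (viter R A B L j)].
Proof.
move=> rho_gt0 j.
have [p [c [_ walk le_S]]] :=
  iter_walk (@ele_refl R) (@ele_trans R) (@ele_eshift R) Fop_lower_arc L j.
have c_le t : (t < L)%N -> `|c t| <= W%:Z by case/walk => /arc_norm_le.
exists (\sum_(0 <= t < L) c t); split=> //.
  have gain : is_walk (gain_step v rho W) L p c.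
    by move=> t tL; have [[_ ?] /c_le] := (walk t tL, tL); rewrite ler_norml => /andP[].
  have := walk_weight_ge rho_gt0 gain; rewrite card_ord /escape_time mulKn //; last first.
    exact: leq_ltn_trans (leq0n _) (ltn_ord j).
  lia.
have : \sum_(0 <= t < L) c t <= W%:Z *+ (L - 0).
  rewrite -sumr_const_nat; apply: ler_sum_nat => t /andP[_ /c_le].
  by rewrite ler_norml => /andP[].
nia.
Qed.

Lemma viter_escape_down : rho < 0 -> forall j, exists S : int,
  [/\ S < 0, - (L * W)%:Z <= S & ele (viter R A B L j) (EFin S%:~R)].
Proof.
move=> rho_lt0 j.
have [p [c [_ walk le_S]]] := iter_walk (r := fun e1 e2 => ele e2 e1) (@ele_refl R)
  (fun _ _ _ le1 le2 => ele_trans le2 le1) (fun d _ _ => @ele_eshift R d _ _)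
  Fop_upper_arc L j.
have c_le t : (t < L)%N -> `|c t| <= W%:Z by case/walk => /arc_norm_le.
exists (\sum_(0 <= t < L) c t); split=> //.
  have gain : is_walk (gain_step (fun h => - v h) (- rho) W) L p (fun t => - c t).
    move=> t tL; have [[_ ?] /c_le] := (walk t tL, tL); rewrite ler_norml => /andP[_ ?].
    by rewrite /gain_step intrN; split; [lra | lia].
  have := walk_weight_ge _ gain; rewrite card_ord /escape_time mulKn; last first.
    exact: leq_ltn_trans (leq0n _) (ltn_ord j).
  rewrite oppr_gt0 sumrN => /(_ rho_lt0).
  set S := \sum_(0 <= t < _) c t; lia.
have : (- W%:Z) *+ (L - 0) <= \sum_(0 <= t < L) c t.
  rewrite -sumr_const_nat; apply: ler_sum_nat => t /andP[_ /c_le].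
  by rewrite ler_norml => /andP[].
nia.
Qed.

Lemma viter_escape : rho != 0 -> ~~ vcont (viter R A B L).
Proof.
case/lt_total/orP => [rho_lt0|rho_gt0].
  apply: vcont_lt0 => j; have [S [S_lt0 _ le_S]] := viter_escape_down rho_lt0 j.
  by apply/negP => /ele_trans/(_ le_S); rewrite /= ler0z leNgt S_lt0.
apply: vcont_gt0 => j; have [S [S_gt0 _ le_S]] := viter_escape_up rho_gt0 j.
by apply/negP => /(ele_trans le_S); rewrite /= lerz0 leNgt S_gt0.
Qed.

Lemma Wconst_gt0 : rho != 0 -> (0 < n)%N -> (0 < W)%N.
Proof.
move=> rho_neq0 n_gt0; pose j := Ordinal n_gt0.
suff : (0 < L * W)%N by rewrite muln_gt0 => /andP[].
by case/lt_total/orP: rho_neq0 => [/viter_escape_down|/viter_escape_up] /(_ j) [S [? ? _]];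
  lia.
Qed.

End EigenvectorWalks.

Lemma exists_first_false (P : pred nat) L : ~~ P L ->
  exists N, [/\ ~~ P N, forall l, (l < N)%N -> P l & (N <= L)%N].
Proof.
move=> PL; have [N notPN N_min] := ex_minnP (ex_intro (fun k => ~~ P k) L PL).
exists N; split=> // [l lN|]; last exact: N_min.
by apply/negPn/negP => /N_min; rewrite leqNgt lN.
Qed.

Theorem mainTheorem13 (R : realFieldType) (m n : nat)
    (A B : 'M[option int]_(m, n)) :
  (forall j : 'I_n, exists i : 'I_m, isSome (A i j)) ->
  (forall i : 'I_m, exists h : 'I_n, isSome (B i h)) ->
  (exists (rho : R) (v : 'I_n -> R),
      rho != 0 /\
      forall j, Fop A B (fun h => EFin (v h)) j = EFin (rho + v j)) ->
  exists N : nat,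
    ~~ vcont (@viter R m n A B N) /\
    (forall l : nat, (l < N)%N -> vcont (@viter R m n A B l)) /\
    (N <= 2 * n ^ 2 * Wconst A B)%N.
Proof.
move=> A_col B_row [rho [v [rho_neq0 v_eigen]]].
have [N [stopN contN N_le]] :=
  exists_first_false (P := fun l => vcont (viter R A B l))
    (viter_escape A_col B_row v_eigen rho_neq0).
exists N; split=> //; split=> //; apply: leq_trans N_le (escape_time_le _).
exact: (Wconst_gt0 A_col B_row v_eigen rho_neq0).
Qed.
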